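(* Let $(k,R,t)\in\mathbb{R}^3$ with $R>0$, $t\neq 0$, $k\neq 0$, $k\neq 1$, let $c=\frac{1-t^2}{1+t^2}$, $s=\frac{2t}{1+t^2}$, $g_k(u)=1-ks^2+2ksc\,u+ks^2u^2$, and let $G(X,u)=0$ be the reduced slope-chart equation of the trisector at its point at infinity $p_\infty=[0:0:1:0]$ (defined in the context). Then the local real projective structure near $p_\infty$ is constant on each connected component of $\{(k,R,t): R>0,\ t\neq 0,\ k\neq 0,\ k\neq 1\}$. More precisely: (1) If $k<0$ or $k>1$, then $g_k$ has two distinct real roots $u_+$ and $u_-$, and near each point $(X,u)=(0,u_\pm)$ the real zero set of $G$ is a transverse real $X$-shaped crossing (two smooth real branches crossing transversely). (2) If $0<k<1$, then $g_k$ has no real root, and no real branch of $\{G=0\}$ approaches the exceptional line $X=0$ at finite slope $u$. Consequently, the local topology at infinity is unchanged within each chamber of the complement of $\{k=0\}\cup\{k=1\}$.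
   Context: The trisector is the common zero set in $\mathbb{R}^3$ of $F_1=y^2-(xs-yc)^2+2z-1$ and $F_2=(x^2-2kz+R^2+k^2)^2-4R^2(x^2+y^2)$ (bisectors of the $x$-axis with the line through $(0,0,1)$ of direction $(c,s,0)$, and of the $x$-axis with the circle of radius $R$ centered at $(0,0,k)$ in the plane $z=k$). Homogenizations: $F_1^h=Y^2-(Xs-Yc)^2+2ZW-W^2$, $F_2^h=(X^2-2kZW+(R^2+k^2)W^2)^2-4R^2W^2(X^2+Y^2)$; the projective closure meets $W=0$ only at $p_\infty$. In the chart $Z=1$, $F_1^h(X,Y,1,W)=0$ is solved locally near the origin as $W=\omega(X,Y)=Q(X,Y)+O(\|(X,Y)\|^4)$ with $Q(X,Y)=\tfrac12(s^2X^2-2scXY-s^2Y^2)$. Slope coordinates: $Y=uX$. The reduced local equation is $G(X,u)=X^{-4}F_2^h(X,uX,1,\omega(X,uX))=g_k(u)^2+X^2H(X,u)$, where $H(X,u)=2(R^2+k^2)g_k(u)q(u)^2-4R^2(1+u^2)q(u)^2+O(X^2)$ and $q(u)=\tfrac12(s^2-2scu-s^2u^2)$. The line $X=0$ in the $(X,u)$-plane is the exceptional line parametrizing directions at $p_\infty$. *)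

From Stdlib Require Import Reals.
From Coquelicot Require Import Coquelicot.
Open Scope R_scope.

Definition cc (t : R) : R := (1 - t ^ 2) / (1 + t ^ 2).
Definition ss (t : R) : R := 2 * t / (1 + t ^ 2).

Definition gk (k t u : R) : R :=
  1 - k * ss t ^ 2 + 2 * k * ss t * cc t * u + k * ss t ^ 2 * u ^ 2.

Definition F1h (c s X Y Z W : R) : R :=
  Y ^ 2 - (X * s - Y * c) ^ 2 + 2 * Z * W - W ^ 2.
Definition F2h (k R0 X Y Z W : R) : R :=
  (X ^ 2 - 2 * k * Z * W + (R0 ^ 2 + k ^ 2) * W ^ 2) ^ 2
  - 4 * R0 ^ 2 * W ^ 2 * (X ^ 2 + Y ^ 2).

(* omega(X,Y): the local solution W of F1h(X,Y,1,W) = 0 near the origin with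
   omega(0,0) = 0, i.e. the root W = 1 - sqrt(1 + Y^2 - (Xs - Yc)^2) of
   W^2 - 2W - (Y^2 - (Xs-Yc)^2) = 0. *)
Definition omega (c s X Y : R) : R :=
  1 - sqrt (1 + Y ^ 2 - (X * s - Y * c) ^ 2).

(* Reduced local equation in the slope chart Y = uX:
   G(X,u) = X^-4 F2h(X, uX, 1, omega(X,uX)) for X <> 0, extended
   (continuously / analytically) to the exceptional line X = 0 by its limit
   g_k(u)^2. *)
Definition Gred (k R0 t X u : R) : R :=
  if Req_dec_T X 0 then gk k t u ^ 2
  else F2h k R0 X (u * X) 1 (omega (cc t) (ss t) X (u * X)) / X ^ 4.

Definition smooth_on (f : R -> R) (a b : R) : Prop :=
  forall (n : nat) (x : R), a < x < b -> ex_derive_n f n x.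

Definition transverse_X_crossing (G : R -> R -> R) (u0 : R) : Prop :=
  exists eps : R, 0 < eps /\
  exists phi1 phi2 : R -> R,
    smooth_on phi1 (- eps) eps /\ smooth_on phi2 (- eps) eps /\
    phi1 0 = u0 /\ phi2 0 = u0 /\
    Derive phi1 0 <> Derive phi2 0 /\
    (forall X u, Rabs X < eps -> Rabs (u - u0) < eps ->
       (G X u = 0 <-> (u = phi1 X \/ u = phi2 X))).

Definition no_branch_at (G : R -> R -> R) (u0 : R) : Prop :=
  exists eps : R, 0 < eps /\
    forall X u, Rabs X < eps -> Rabs (u - u0) < eps -> G X u <> 0.

From Stdlib Require Import Reals Lra Psatz Ranalysis5 ClassicalEpsilon.
From Coquelicot Require Import Coquelicot.
Open Scope R_scope.

(* Write omega(X, uX) = X * nu with nu = nu (q u) X.  Since omega solves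
   F1h = 0, we get 2 nu = X (2 q(u) + nu^2), so nu is of order q(u) X near the
   exceptional line, and X^-4 F2h factors as P(nu) P(-nu) with
     P(w) = g_k(u) + (R^2 + k^2 - k) w^2 - 2 R sqrt(1 + u^2) w.
   For 0 < k < 1, g_k >= 1 - k > 0, so both factors stay positive near X = 0.
   For k < 0 or k > 1, g_k has two simple roots and R^2 + k^2 - k > 0.  Near a
   root u0 the only small root of P is mu(u) = g_k(u) / (R sqrt(1 + u^2) + sqrt disc),
   so the zero set is the pair of graphs X = xi(u), X = -xi(u), where
   xi = 2 mu / (2 q + mu^2).  As xi(u0) = 0 and xi'(u0) is a nonzero multiple of
   g_k'(u0), inverting xi gives the two smooth branches u = xi^-1(X) and
   u = xi^-1(-X), whose slopes at X = 0 are opposite. *)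

(** * Smooth functions on open sets *)

Definition Ioo (a b : R) : R -> Prop := fun x => a < x < b.

Lemma open_Ioo a b : open (Ioo a b).
Proof. apply open_and; [apply open_gt | apply open_lt]. Qed.

Fixpoint Ck (n : nat) (D : R -> Prop) (f : R -> R) : Prop :=
  match n with
  | O => True
  | S n => (forall x, D x -> ex_derive f x) /\ Ck n D (Derive f)
  end.

Section Ck_calculus.

Variable D : R -> Prop.
Hypothesis D_open : open D.

Lemma Ck_ext n f g : (forall x, D x -> f x = g x) -> Ck n D f -> Ck n D g.
Proof.
  revert f g; induction n as [|n IH]; simpl; auto.
  intros f g Hfg [Hf HDf].
  assert (Hloc : forall x, D x -> locally x (fun y => f y = g y)).
  { intros x Hx. apply (filter_imp D); auto. }
  split.
  - intros x Hx. apply (ex_derive_ext_loc f); auto.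
  - apply (IH (Derive f)); auto. intros x Hx. apply Derive_ext_loc; auto.
Qed.

Lemma Ck_pred n f : Ck (S n) D f -> Ck n D f.
Proof.
  revert f; induction n as [|n IH]; simpl; auto.
  intros f [Hf HDf]. split; auto.
Qed.

Lemma Ck_ex_derive n f x : Ck (S n) D f -> D x -> ex_derive f x.
Proof. intros [Hf _]; auto. Qed.

Lemma Ck_const n a : Ck n D (fun _ => a).
Proof.
  revert a; induction n as [|n IH]; simpl; auto. intros a. split.
  - intros; apply ex_derive_const.
  - apply (Ck_ext n (fun _ => 0)); auto. intros x _. now rewrite Derive_const.
Qed.

Lemma Ck_id n : Ck n D (fun x => x).
Proof.
  destruct n as [|n]; simpl; auto. split.
  - intros; apply ex_derive_id.
  - apply (Ck_ext n (fun _ => 1)); [|apply Ck_const]. intros x _. now rewrite Derive_id.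
Qed.

Lemma Ck_plus n f g : Ck n D f -> Ck n D g -> Ck n D (fun x => f x + g x).
Proof.
  revert f g; induction n as [|n IH]; simpl; auto.
  intros f g [Hf HDf] [Hg HDg]. split.
  - intros x Hx. exact (ex_derive_plus f g x (Hf x Hx) (Hg x Hx)).
  - apply (Ck_ext n (fun x => Derive f x + Derive g x)); auto.
    intros x Hx. rewrite Derive_plus; auto.
Qed.

Lemma Ck_mult n f g : Ck n D f -> Ck n D g -> Ck n D (fun x => f x * g x).
Proof.
  revert f g; induction n as [|n IH]; simpl; auto.
  intros f g Hf Hg. split.
  - intros x Hx. apply ex_derive_mult; [apply Hf | apply Hg]; auto.
  - apply (Ck_ext n (fun x => Derive f x * g x + f x * Derive g x)).
    + intros x Hx. rewrite Derive_mult; auto; [apply Hf | apply Hg]; auto.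
    + apply Ck_plus; apply IH; try apply Hf; try apply Hg;
        apply (Ck_pred n); simpl; auto.
Qed.

Lemma Ck_opp n f : Ck n D f -> Ck n D (fun x => - f x).
Proof.
  intros Hf. apply (Ck_ext n (fun x => -1 * f x)); [intros; ring|].
  apply Ck_mult; auto using Ck_const.
Qed.

Lemma Ck_minus n f g : Ck n D f -> Ck n D g -> Ck n D (fun x => f x - g x).
Proof. intros Hf Hg. apply Ck_plus; auto using Ck_opp. Qed.

Lemma Ck_pow n f m : Ck n D f -> Ck n D (fun x => f x ^ m).
Proof.
  intros Hf. induction m as [|m IH]; simpl; [apply Ck_const | apply Ck_mult; auto].
Qed.

End Ck_calculus.

Lemma Ck_subset n (D D' : R -> Prop) f :
  (forall x, D' x -> D x) -> Ck n D f -> Ck n D' f.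
Proof.
  revert f; induction n as [|n IH]; simpl; auto.
  intros f HD [Hf HDf]. split; auto.
Qed.

Lemma Ck_comp n (D E : R -> Prop) h p : open D -> open E ->
  (forall x, D x -> E (p x)) -> Ck n E h -> Ck n D p -> Ck n D (fun x => h (p x)).
Proof.
  revert h p; induction n as [|n IH]; simpl; auto.
  intros h p HD HE Hp Hh Hpp. split.
  - intros x Hx. apply ex_derive_comp; [apply Hh, Hp | apply Hpp]; auto.
  - apply (Ck_ext D HD n (fun x => Derive p x * Derive h (p x))).
    + intros x Hx. symmetry. apply Derive_comp; [apply Hh, Hp | apply Hpp]; auto.
    + apply Ck_mult; auto; [apply Hpp|].
      apply IH; auto; [apply Hh | apply (Ck_pred D n); simpl; auto].
Qed.

Lemma Ck_Rinv n : Ck n (fun x => x <> 0) Rinv.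
Proof.
  induction n as [|n IH]; simpl; auto.
  assert (Hd : forall x, x <> 0 -> is_derive Rinv x (-1 * (/ x * / x))).
  { intros x Hx. replace (-1 * (/ x * / x)) with (- 1 / x ^ 2) by (field; auto).
    exact (is_derive_inv (fun y => y) x 1 (is_derive_id x) Hx). }
  split.
  - intros x Hx. eexists. apply Hd, Hx.
  - apply (Ck_ext _ (open_neq 0) n (fun x => -1 * (/ x * / x))).
    + intros x Hx. symmetry. apply is_derive_unique, Hd, Hx.
    + apply Ck_mult; auto using open_neq, Ck_const. apply Ck_mult; auto using open_neq.
Qed.

Lemma Ck_sqrt n : Ck n (fun x => 0 < x) sqrt.
Proof.
  induction n as [|n IH]; simpl; auto.
  assert (Hd : forall x, 0 < x -> is_derive sqrt x (/ (2 * sqrt x))).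
  { intros x Hx. replace (/ (2 * sqrt x)) with (1 / (2 * sqrt x))
      by (field; apply Rgt_not_eq, sqrt_lt_R0, Hx).
    exact (is_derive_sqrt (fun y => y) x 1 (is_derive_id x) Hx). }
  split.
  - intros x Hx. eexists. apply Hd, Hx.
  - apply (Ck_ext _ (open_gt 0) n (fun x => / (2 * sqrt x))).
    + intros x Hx. symmetry. apply is_derive_unique, Hd, Hx.
    + apply (Ck_comp n _ (fun x => x <> 0)); auto using open_gt, open_neq, Ck_Rinv.
      * intros x Hx. apply Rgt_not_eq, Rmult_lt_0_compat; [lra | apply sqrt_lt_R0, Hx].
      * apply Ck_mult; auto using open_gt, Ck_const.
Qed.

Lemma Ck_div n D f g : open D -> (forall x, D x -> g x <> 0) ->
  Ck n D f -> Ck n D g -> Ck n D (fun x => f x / g x).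
Proof.
  intros HD Hg Hf Hg'. apply Ck_mult; auto.
  apply (Ck_comp n D (fun x => x <> 0) Rinv g); auto using open_neq, Ck_Rinv.
Qed.

Lemma Ck_sqrt_comp n D f : open D -> (forall x, D x -> 0 < f x) ->
  Ck n D f -> Ck n D (fun x => sqrt (f x)).
Proof.
  intros HD Hf Hf'. apply (Ck_comp n D (fun x => 0 < x)); auto using open_gt, Ck_sqrt.
Qed.

Ltac solve_Ck := repeat first [ assumption | apply Ck_minus | apply Ck_plus
  | apply Ck_mult | apply Ck_pow | apply Ck_const | apply Ck_id ].

Lemma Ck_ex_derive_n n D f x : open D -> Ck n D f -> D x -> ex_derive_n f n x.
Proof.
  revert f; induction n as [|n IH]; intros f HD Hf Hx; [simpl; auto|].
  destruct Hf as [Hf HDf]. destruct n as [|n]; [apply Hf, Hx|].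
  assert (H : ex_derive_n (Derive f) (S n) x) by (apply IH; auto).
  simpl in H |- *. apply ex_derive_ext with (Derive_n (Derive f) n); auto.
  intros y. change (Derive f) with (Derive_n f 1).
  now rewrite Derive_n_comp, Nat.add_comm.
Qed.

Lemma smooth_on_of_Ck f a b : (forall n, Ck n (Ioo a b) f) -> smooth_on f a b.
Proof. intros Hf n x Hx. apply (Ck_ex_derive_n n (Ioo a b)); auto using open_Ioo. Qed.

(** * Inverse of a smooth increasing function *)

Section MonotoneInverse.

Variables (T : R -> R) (a b lb ub : R).
Hypotheses (a_lt_lb : a < lb) (lb_lt_ub : lb < ub) (ub_lt_b : ub < b).
Hypothesis T_smooth : forall n, Ck n (Ioo a b) T.
Hypothesis T_deriv_pos : forall u, Ioo a b u -> 0 < Derive T u.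

Let T_ex_derive u : Ioo a b u -> ex_derive T u.
Proof. apply (Ck_ex_derive _ 0), T_smooth. Qed.

Lemma increasing_of_Derive_pos x y : a < x -> x < y -> y < b -> T x < T y.
Proof.
  apply (incr_function T a b (Derive T)); simpl.
  - intros z Hz1 Hz2. apply Derive_correct, T_ex_derive. split; auto.
  - intros z Hz1 Hz2. apply T_deriv_pos. split; auto.
Qed.

Let T_continuous u : Ioo a b u -> continuity_pt T u.
Proof. intros Hu. apply derivable_continuous_pt, ex_derive_Reals_0, T_ex_derive, Hu. Qed.

Definition monotone_inv (y : R) : R :=
  epsilon (inhabits 0) (fun u => lb <= u <= ub /\ T u = y).

Lemma monotone_inv_spec y :
  T lb <= y <= T ub -> lb <= monotone_inv y <= ub /\ T (monotone_inv y) = y.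
Proof.
  intros Hy. apply (epsilon_spec (inhabits 0) (fun u => lb <= u <= ub /\ T u = y)).
  destruct (Req_dec y (T lb)) as [->|Hlb]; [exists lb; split; [lra|auto]|].
  destruct (Req_dec y (T ub)) as [->|Hub]; [exists ub; split; [lra|auto]|].
  destruct (IVT_interv (fun u => T u - y) lb ub) as [z [Hz1 Hz2]]; try lra.
  - intros u Hu. apply continuity_pt_minus; [apply T_continuous; unfold Ioo; lra|].
    apply continuity_pt_const. intros ? ?; reflexivity.
  - exists z. split; [lra | simpl in Hz2; lra].
Qed.

Lemma monotone_inv_iff y u :
  T lb <= y <= T ub -> lb <= u <= ub -> (T u = y <-> u = monotone_inv y).
Proof.
  intros Hy Hu. destruct (monotone_inv_spec y Hy) as [Hpy HTp]. split; [|now intros ->].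
  intros E. destruct (Rtotal_order u (monotone_inv y)) as [H|[H|H]]; auto.
  - assert (T u < T (monotone_inv y)) by (apply increasing_of_Derive_pos; lra). lra.
  - assert (T (monotone_inv y) < T u) by (apply increasing_of_Derive_pos; lra). lra.
Qed.

Lemma is_derive_monotone_inv y :
  T lb < y < T ub -> is_derive monotone_inv y (/ Derive T (monotone_inv y)).
Proof.
  intros Hy.
  assert (Hlub : T lb < T ub) by lra.
  assert (Hlb : monotone_inv (T lb) = lb) by (symmetry; apply monotone_inv_iff; lra).
  assert (Hub : monotone_inv (T ub) = ub) by (symmetry; apply monotone_inv_iff; lra).
  assert (Hpy : lb <= monotone_inv y <= ub) by (apply monotone_inv_spec; lra).
  assert (Hcont : continuity_pt monotone_inv y).
  { apply (continuity_pt_recip_interv T monotone_inv lb ub); auto.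
    - intros x z Hx Hxz Hz. apply increasing_of_Derive_pos; lra.
    - intros x Hx1 Hx2. unfold comp, id. apply monotone_inv_spec. lra.
    - intros x Hx1 Hx2. apply monotone_inv_spec. lra.
    - intros x Hx. apply T_continuous. unfold Ioo; lra. }
  assert (Prf : forall u, monotone_inv (T lb) <= u <= monotone_inv (T ub) -> derivable_pt T u).
  { intros u Hu. apply ex_derive_Reals_0, T_ex_derive. unfold Ioo; lra. }
  assert (Prg : monotone_inv (T lb) <= monotone_inv y <= monotone_inv (T ub)) by lra.
  assert (HT' : 0 < Derive T (monotone_inv y)) by (apply T_deriv_pos; unfold Ioo; lra).
  assert (Hder : derive_pt T (monotone_inv y) (Prf (monotone_inv y) Prg)
                 = Derive T (monotone_inv y)).
  { apply derive_pt_eq_0, is_derive_Reals, Derive_correct, T_ex_derive. unfold Ioo; lra. }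
  apply is_derive_Reals.
  replace (/ Derive T (monotone_inv y))
    with (1 / derive_pt T (monotone_inv y) (Prf (monotone_inv y) Prg))
    by (rewrite Hder; field; lra).
  apply (derivable_pt_lim_recip_interv T monotone_inv (T lb) (T ub) y Prf Hcont Hlub Hy Prg).
  - intros x Hx. unfold comp, id. apply monotone_inv_spec, Hx.
  - rewrite Hder. lra.
Qed.

Lemma Ck_monotone_inv n : Ck n (Ioo (T lb) (T ub)) monotone_inv.
Proof.
  induction n as [|n IH]; simpl; auto. split.
  - intros y Hy. eexists. apply is_derive_monotone_inv, Hy.
  - apply (Ck_ext _ (open_Ioo _ _) n (fun y => / Derive T (monotone_inv y))).
    + intros y Hy. symmetry. apply is_derive_unique, is_derive_monotone_inv, Hy.
    + apply (Ck_comp n _ (Ioo a b) (fun u => / Derive T u)); auto using open_Ioo.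
      * intros y Hy. destruct (monotone_inv_spec y) as [H _]; unfold Ioo in *; lra.
      * apply (Ck_comp n _ (fun x => x <> 0)); auto using open_Ioo, open_neq, Ck_Rinv.
        -- intros u Hu. apply Rgt_not_eq, T_deriv_pos, Hu.
        -- exact (proj2 (T_smooth (S n))).
Qed.

End MonotoneInverse.

(** * Transverse crossings from a branch function *)

Lemma locally_pos (f : R -> R) x : continuous f x -> 0 < f x ->
  exists d, 0 < d /\ forall y, Rabs (y - x) < d -> 0 < f y.
Proof.
  intros Hc Hf. destruct (Hc _ (open_gt 0 (f x) Hf)) as [d Hd].
  exists d. split; [apply cond_pos | intros y Hy; apply Hd, Hy].
Qed.

Lemma Derive_pos_near (T : R -> R) u0 d : 0 < d ->
  Ck 2 (Ioo (u0 - d) (u0 + d)) T -> 0 < Derive T u0 ->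
  exists d', 0 < d' <= d /\ forall u, Ioo (u0 - d') (u0 + d') u -> 0 < Derive T u.
Proof.
  intros Hd HT HT0.
  assert (Hu0 : Ioo (u0 - d) (u0 + d) u0) by (unfold Ioo; lra).
  destruct (locally_pos (Derive T) u0) as [d1 [Hd1 HT1]]; auto.
  { exact (ex_derive_continuous (Derive T) u0 (Ck_ex_derive _ 0 _ _ (proj2 HT) Hu0)). }
  exists (Rmin d d1). split; [split; [apply Rmin_pos; auto | apply Rmin_l]|].
  intros u Hu. apply HT1, Rabs_lt_between'. unfold Ioo in Hu.
  assert (H := Rmin_r d d1). lra.
Qed.

Lemma local_inverse (T : R -> R) u0 b : 0 < b ->
  (forall n, Ck n (Ioo (u0 - b) (u0 + b)) T) ->
  (forall u, Ioo (u0 - b) (u0 + b) u -> 0 < Derive T u) ->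
  exists e p, 0 < e <= b /\ p (T u0) = u0 /\ 0 < Derive p (T u0) /\
    (forall n, Ck n (Ioo (T u0 - e) (T u0 + e)) p) /\
    (forall y u, Rabs (y - T u0) < e -> Rabs (u - u0) < e -> (T u = y <-> u = p y)).
Proof.
  intros Hb Hsm Hpos.
  set (lb := u0 - b / 2). set (ub := u0 + b / 2).
  assert (Hincr := increasing_of_Derive_pos T (u0 - b) (u0 + b) Hsm Hpos).
  assert (Hlb : T lb < T u0) by (apply Hincr; unfold lb; lra).
  assert (Hub : T u0 < T ub) by (apply Hincr; unfold ub; lra).
  set (e := Rmin (b / 2) (Rmin (T ub - T u0) (T u0 - T lb))).
  assert (He1 : e <= b / 2) by apply Rmin_l.
  assert (He2 : e <= T ub - T u0) by (eapply Rle_trans; [apply Rmin_r | apply Rmin_l]).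
  assert (He3 : e <= T u0 - T lb) by (eapply Rle_trans; [apply Rmin_r | apply Rmin_r]).
  assert (He : 0 < e) by (repeat apply Rmin_pos; lra).
  assert (Hiff : forall y u, Rabs (y - T u0) < e -> Rabs (u - u0) < e ->
                   (T u = y <-> u = monotone_inv T lb ub y)).
  { intros y u Hy Hu. apply Rabs_lt_between' in Hy. apply Rabs_lt_between' in Hu.
    apply (monotone_inv_iff T (u0 - b) (u0 + b)); unfold lb, ub in *; auto; lra. }
  assert (Hp0 : monotone_inv T lb ub (T u0) = u0).
  { symmetry. apply Hiff; try reflexivity; rewrite Rminus_diag_eq, Rabs_R0; auto. }
  exists e, (monotone_inv T lb ub).
  split; [split; lra|]. split; [exact Hp0|].
  split; [|split; [|exact Hiff]].
  - rewrite (is_derive_unique _ _ _ (is_derive_monotone_inv T (u0 - b) (u0 + b) lb ub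
      ltac:(unfold lb; lra) ltac:(unfold lb, ub; lra) ltac:(unfold ub; lra) Hsm Hpos (T u0)
      ltac:(lra))).
    rewrite Hp0. apply Rinv_0_lt_compat, Hpos. unfold Ioo; lra.
  - intros n. apply (Ck_subset n (Ioo (T lb) (T ub))); [unfold Ioo; intros; lra|].
    apply (Ck_monotone_inv T (u0 - b) (u0 + b)); unfold lb, ub; auto; lra.
Qed.

Lemma transverse_X_crossing_of_increasing_branch (G : R -> R -> R) (T : R -> R) u0 d :
  0 < d -> (forall n, Ck n (Ioo (u0 - d) (u0 + d)) T) -> T u0 = 0 -> 0 < Derive T u0 ->
  (forall X u, Rabs X < d -> Rabs (u - u0) < d -> (G X u = 0 <-> T u = X \/ T u = - X)) ->
  transverse_X_crossing G u0.
Proof.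
  intros Hd HT HT0 HT1 HG.
  destruct (Derive_pos_near T u0 d Hd (HT 2%nat) HT1) as [b [Hb Hpos]].
  destruct (local_inverse T u0 b) as [e [p [He [Hp0 [Hp1 [Hp HTp]]]]]]; [lra | | exact Hpos|].
  { intros n. apply (Ck_subset n (Ioo (u0 - d) (u0 + d))); [unfold Ioo; intros; lra | apply HT]. }
  rewrite HT0 in Hp0, Hp1, Hp, HTp.
  assert (Hp' : forall n, Ck n (Ioo (- e) e) p).
  { intros n. apply (Ck_subset n (Ioo (0 - e) (0 + e))); [unfold Ioo; intros; lra | apply Hp]. }
  assert (Hpo : forall n, Ck n (Ioo (- e) e) (fun X => p (- X))).
  { intros n. apply (Ck_comp n _ (Ioo (- e) e)); auto using open_Ioo.
    - unfold Ioo; intros; lra.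
    - apply Ck_opp, Ck_id; apply open_Ioo. }
  exists e. split; [lra|]. exists p, (fun X => p (- X)).
  split; [apply smooth_on_of_Ck, Hp'|].
  split; [apply smooth_on_of_Ck, Hpo|].
  split; [exact Hp0|]. split; [rewrite Ropp_0; exact Hp0|].
  split.
  - assert (H0 : Ioo (- e) e 0) by (unfold Ioo; lra).
    rewrite (Derive_comp p (fun X => - X));
      [| rewrite Ropp_0; apply (Ck_ex_derive _ 0 _ _ (Hp' 1%nat) H0)
       | exact (ex_derive_opp (fun X => X) 0 (ex_derive_id 0))].
    rewrite Derive_opp, Derive_id, Ropp_0. lra.
  - intros X u HX Hu.
    rewrite HG by lra.
    rewrite (HTp X u), (HTp (- X) u); try tauto; rewrite Rminus_0_r; auto.
    now rewrite Rabs_Ropp.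
Qed.

Lemma transverse_X_crossing_of_branch (G : R -> R -> R) (T : R -> R) u0 d :
  0 < d -> (forall n, Ck n (Ioo (u0 - d) (u0 + d)) T) -> T u0 = 0 -> Derive T u0 <> 0 ->
  (forall X u, Rabs X < d -> Rabs (u - u0) < d -> (G X u = 0 <-> T u = X \/ T u = - X)) ->
  transverse_X_crossing G u0.
Proof.
  intros Hd HT HT0 HT1 HG. destruct (Rdichotomy _ _ HT1) as [Hneg|Hpos].
  - apply (transverse_X_crossing_of_increasing_branch G (fun u => - T u) u0 d); auto.
    + intros n. apply Ck_opp, HT. apply open_Ioo.
    + rewrite HT0. ring.
    + rewrite Derive_opp. lra.
    + intros X u HX Hu. rewrite HG by auto. lra.
  - apply (transverse_X_crossing_of_increasing_branch G T u0 d); auto.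
Qed.

(** * The reduced equation in the slope chart *)

Lemma cc_ss_sq t : cc t ^ 2 + ss t ^ 2 = 1.
Proof. unfold cc, ss. assert (0 < 1 + t ^ 2) by nra. field. lra. Qed.

Lemma ss_neq0 t : t <> 0 -> ss t <> 0.
Proof.
  intros Ht. unfold ss. assert (0 < 1 + t ^ 2) by nra.
  apply Rmult_integral_contrapositive_currified; [lra | apply Rinv_neq_0_compat; lra].
Qed.

Definition qq (t u : R) : R := (ss t ^ 2 - 2 * ss t * cc t * u - ss t ^ 2 * u ^ 2) / 2.

Definition KK (k R0 : R) : R := R0 ^ 2 + k ^ 2 - k.

Lemma gk_qq k t u : gk k t u = 1 - 2 * k * qq t u.
Proof. unfold gk, qq. field. Qed.

Lemma gk_square k t u :
  k * ss t ^ 2 * gk k t u = (k * ss t ^ 2 * u + k * ss t * cc t) ^ 2 + k * ss t ^ 2 * (1 - k).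
Proof.
  transitivity ((k * ss t ^ 2 * u + k * ss t * cc t) ^ 2 + k * ss t ^ 2 * (1 - k)
                + k ^ 2 * ss t ^ 2 * (1 - (cc t ^ 2 + ss t ^ 2))); [unfold gk; ring|].
  rewrite cc_ss_sq. ring.
Qed.

Lemma Rabs_qq_le t u : Rabs (2 * qq t u) <= 1 + 2 * u ^ 2.
Proof.
  assert (H := cc_ss_sq t). unfold qq.
  assert (H1 := pow2_ge_0 (ss t * u + cc t)). assert (H2 := pow2_ge_0 (ss t * u - cc t)).
  apply Rabs_le. split; nra.
Qed.

(* At [X = 0] the division returns [0]. *)
Definition nu (q X : R) : R := (1 - sqrt (1 - 2 * q * X ^ 2)) / X.

Lemma omega_slope_chart t X u : X <> 0 ->
  omega (cc t) (ss t) X (u * X) = X * nu (qq t u) X.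
Proof.
  intros HX. unfold omega, nu.
  replace (1 + (u * X) ^ 2 - (X * ss t - u * X * cc t) ^ 2) with (1 - 2 * qq t u * X ^ 2).
  - field. exact HX.
  - transitivity (1 - 2 * qq t u * X ^ 2 + (u * X) ^ 2 * (1 - (cc t ^ 2 + ss t ^ 2)));
      [rewrite cc_ss_sq; ring | unfold qq; field].
Qed.

Lemma nu_eq q X : X <> 0 -> 0 <= 1 - 2 * q * X ^ 2 -> 2 * nu q X = X * (2 * q + nu q X ^ 2).
Proof.
  intros HX Hpos. assert (HS := sqrt_sqrt _ Hpos). unfold nu.
  set (S := sqrt (1 - 2 * q * X ^ 2)) in *. field_simplify_eq; auto.
  replace (S ^ 2) with (S * S) by ring. rewrite HS. ring.
Qed.

Lemma Rabs_nu_le q X : 0 <= 1 - 2 * q * X ^ 2 -> Rabs (nu q X) <= 2 * Rabs q * Rabs X.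
Proof.
  intros Hp. destruct (Req_dec X 0) as [->|HX].
  { replace (nu q 0) with 0
      by (unfold nu; rewrite pow_i, Rmult_0_r, Rminus_0_r, sqrt_1 by lia; unfold Rdiv; ring).
    rewrite Rabs_R0, Rmult_0_r. lra. }
  assert (HS := sqrt_sqrt _ Hp). assert (HS0 := sqrt_pos (1 - 2 * q * X ^ 2)).
  unfold nu. set (S := sqrt (1 - 2 * q * X ^ 2)) in *.
  replace ((1 - S) / X) with (2 * q * X / (1 + S)) by (field_simplify_eq; [nra | split; lra]).
  unfold Rdiv. rewrite !Rabs_mult, (Rabs_pos_eq 2), Rabs_inv, (Rabs_pos_eq (1 + S)) by lra.
  assert (0 < / (1 + S) <= 1).
  { split; [apply Rinv_0_lt_compat; lra | rewrite <- Rinv_1; apply Rinv_le_contravar; lra]. }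
  assert (H1 := Rabs_pos q). assert (H2 := Rabs_pos X).
  assert (0 <= Rabs q * Rabs X) by nra. nra.
Qed.

Lemma nu_of_branch q n : 0 < 4 * q ^ 2 - n ^ 4 -> nu q (2 * n / (2 * q + n ^ 2)) = n.
Proof.
  intros Hqn. assert (HD : 2 * q + n ^ 2 <> 0) by (intro E; nra).
  set (X := 2 * n / (2 * q + n ^ 2)).
  assert (Hsq : sqrt (1 - 2 * q * X ^ 2) = 1 - n * X).
  { assert (Hnn : 0 <= 1 - n * X).
    { replace (1 - n * X) with ((4 * q ^ 2 - n ^ 4) / (2 * q + n ^ 2) ^ 2)
        by (unfold X; field; exact HD).
      apply Rlt_le, Rdiv_lt_0_compat; auto. apply pow2_gt_0; auto. }
    rewrite <- (sqrt_pow2 (1 - n * X) Hnn). f_equal. unfold X. field. exact HD. }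
  unfold nu. rewrite Hsq.
  destruct (Req_dec n 0) as [->|Hn].
  - unfold X. unfold Rdiv. ring.
  - field. unfold X. apply Rmult_integral_contrapositive_currified; [lra|].
    apply Rinv_neq_0_compat, HD.
Qed.

Definition nu_quadratic (k R0 t u w : R) : R :=
  gk k t u + KK k R0 * w ^ 2 - 2 * R0 * sqrt (1 + u ^ 2) * w.

Lemma one_le_sqrt_1_plus_sq u : 1 <= sqrt (1 + u ^ 2).
Proof. rewrite <- sqrt_1 at 1. apply sqrt_le_1_alt. nra. Qed.

Lemma sqrt_1_plus_sq_le u : sqrt (1 + u ^ 2) <= 1 + Rabs u.
Proof.
  assert (H := Rabs_pos u).
  rewrite <- (sqrt_pow2 (1 + Rabs u)) by lra.
  apply sqrt_le_1_alt. rewrite <- (pow2_abs u). nra.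
Qed.

Lemma Gred_0 k R0 t u : Gred k R0 t 0 u = gk k t u ^ 2.
Proof. unfold Gred. destruct (Req_dec_T 0 0); [reflexivity | congruence]. Qed.

Lemma Gred_factor k R0 t X u : X <> 0 -> 0 <= 1 - 2 * qq t u * X ^ 2 ->
  Gred k R0 t X u =
  nu_quadratic k R0 t u (nu (qq t u) X) * nu_quadratic k R0 t u (- nu (qq t u) X).
Proof.
  intros HX Hpos. unfold Gred. destruct (Req_dec_T X 0) as [E|_]; [contradiction|].
  rewrite omega_slope_chart by exact HX.
  assert (Hnu := nu_eq _ _ HX Hpos).
  assert (Hm := sqrt_sqrt (1 + u ^ 2) ltac:(nra)).
  unfold nu_quadratic, F2h. set (v := nu (qq t u) X) in *.
  assert (HA : X ^ 2 - 2 * k * 1 * (X * v) + (R0 ^ 2 + k ^ 2) * (X * v) ^ 2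
               = X ^ 2 * (gk k t u + KK k R0 * v ^ 2)).
  { rewrite gk_qq. unfold KK. replace (X ^ 2 - 2 * k * 1 * (X * v) + (R0 ^ 2 + k ^ 2) * (X * v) ^ 2)
      with (X ^ 2 * (1 - 2 * k * qq t u + (R0 ^ 2 + k ^ 2 - k) * v ^ 2)
            - k * X * (2 * v - X * (2 * qq t u + v ^ 2))) by ring.
    rewrite Hnu. ring. }
  rewrite HA. transitivity ((gk k t u + KK k R0 * v ^ 2) ^ 2 - 4 * R0 ^ 2 * (1 + u ^ 2) * v ^ 2).
  - field. exact HX.
  - set (m := sqrt (1 + u ^ 2)) in *. rewrite <- Hm. ring.
Qed.

(** * The chamber 0 < k < 1 *)

Lemma gk_ge k t u : 0 < k -> t <> 0 -> 1 - k <= gk k t u.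
Proof.
  intros Hk Ht.
  assert (Hks : 0 < k * ss t ^ 2)
    by (apply Rmult_lt_0_compat; [lra | apply pow2_gt_0, ss_neq0, Ht]).
  assert (H := gk_square k t u). assert (H2 := pow2_ge_0 (k * ss t ^ 2 * u + k * ss t * cc t)).
  apply (Rmult_le_reg_l (k * ss t ^ 2)); nra.
Qed.

Lemma nu_quadratic_pos k R0 t u w : 0 <= R0 -> Rabs w <= 1 ->
  (Rabs (KK k R0) + 2 * R0 * sqrt (1 + u ^ 2)) * Rabs w < gk k t u ->
  0 < nu_quadratic k R0 t u w.
Proof.
  intros HR Hw Hlt. unfold nu_quadratic.
  assert (Hm := sqrt_pos (1 + u ^ 2)). assert (Hwa := Rabs_pos w).
  assert (Hw2 : w ^ 2 <= Rabs w) by (rewrite <- pow2_abs; nra).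
  assert (HK : - Rabs (KK k R0) * Rabs w <= KK k R0 * w ^ 2).
  { assert (H1 := Rabs_maj2 (KK k R0)). assert (H2 := Rabs_pos (KK k R0)).
    assert (H3 := pow2_ge_0 w). nra. }
  assert (Hlin : R0 * sqrt (1 + u ^ 2) * w <= R0 * sqrt (1 + u ^ 2) * Rabs w).
  { apply Rmult_le_compat_l; [apply Rmult_le_pos; auto | apply RRle_abs]. }
  nra.
Qed.

Lemma nu_near_exceptional_line t B X u :
  Rabs u <= B -> Rabs X <= / (2 * (1 + 2 * B ^ 2)) ->
  0 <= 1 - 2 * qq t u * X ^ 2 /\ Rabs (nu (qq t u) X) <= (1 + 2 * B ^ 2) * Rabs X.
Proof.
  intros Hu HX. set (Q := 1 + 2 * B ^ 2) in *.
  assert (HQ : 1 <= Q) by (unfold Q; nra).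
  assert (Hq : Rabs (2 * qq t u) <= Q).
  { eapply Rle_trans; [apply Rabs_qq_le|]. unfold Q. rewrite <- (pow2_abs u).
    assert (H := Rabs_pos u). nra. }
  assert (HXa := Rabs_pos X). assert (Hqa := Rabs_pos (2 * qq t u)).
  assert (HQX : Q * Rabs X <= / 2).
  { apply Rle_trans with (Q * / (2 * Q)); [apply Rmult_le_compat_l; lra | right; field; lra]. }
  assert (Hpos : 0 <= 1 - 2 * qq t u * X ^ 2).
  { rewrite <- (pow2_abs X). assert (H := Rle_abs (2 * qq t u)). nra. }
  split; [exact Hpos|].
  eapply Rle_trans; [apply Rabs_nu_le, Hpos|].
  replace (2 * Rabs (qq t u)) with (Rabs (2 * qq t u))
    by (rewrite Rabs_mult, Rabs_pos_eq; lra).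
  apply Rmult_le_compat_r; lra.
Qed.

Lemma Gred_ne0_near k R0 t c B X u : 0 <= R0 -> c <= gk k t u -> Rabs u <= B ->
  Rabs X <= / (2 * (1 + 2 * B ^ 2)) ->
  (Rabs (KK k R0) + 2 * R0 * (1 + B)) * ((1 + 2 * B ^ 2) * Rabs X) < c ->
  Gred k R0 t X u <> 0.
Proof.
  intros HR Hg HuB HXQ Hsmall.
  set (Q := 1 + 2 * B ^ 2) in *. set (M := Rabs (KK k R0) + 2 * R0 * (1 + B)) in *.
  assert (HB : 0 <= B) by (assert (H := Rabs_pos u); lra).
  assert (HQ : 1 <= Q) by (unfold Q; nra).
  assert (HM : 0 <= M) by (unfold M; assert (H := Rabs_pos (KK k R0)); nra).
  assert (HXa := Rabs_pos X).
  destruct (Req_dec X 0) as [->|HX0].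
  { rewrite Gred_0. rewrite Rabs_R0, Rmult_0_r, Rmult_0_r in Hsmall.
    apply pow_nonzero. lra. }
  destruct (nu_near_exceptional_line t B X u HuB HXQ) as [Hpos Hnu].
  fold Q in Hnu. set (v := nu (qq t u) X) in *.
  assert (HQX : Q * Rabs X <= / 2).
  { apply Rle_trans with (Q * / (2 * Q)); [apply Rmult_le_compat_l; lra | right; field; lra]. }
  assert (Hcoef : 0 <= Rabs (KK k R0) + 2 * R0 * sqrt (1 + u ^ 2) <= M).
  { unfold M. assert (H1 := sqrt_1_plus_sq_le u). assert (H2 := sqrt_pos (1 + u ^ 2)).
    assert (H3 := Rabs_pos (KK k R0)). nra. }
  assert (Hfactor : forall w, Rabs w = Rabs v -> 0 < nu_quadratic k R0 t u w).
  { intros w Hw. apply nu_quadratic_pos; auto; rewrite Hw; [lra|].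
    assert (H := Rabs_pos v). nra. }
  rewrite Gred_factor by auto.
  apply Rgt_not_eq, Rmult_lt_0_compat; apply Hfactor; [reflexivity | apply Rabs_Ropp].
Qed.

Lemma no_branch_at_of_gk_ge k R0 t c u0 : 0 <= R0 -> 0 < c ->
  (forall u, c <= gk k t u) -> no_branch_at (Gred k R0 t) u0.
Proof.
  intros HR Hc Hg.
  set (B := Rabs u0 + 1). set (Q := 1 + 2 * B ^ 2).
  set (M := Rabs (KK k R0) + 2 * R0 * (1 + B)).
  assert (HB : 1 <= B) by (unfold B; assert (H := Rabs_pos u0); lra).
  assert (HQ : 1 <= Q) by (unfold Q; nra).
  assert (HM : 0 <= M) by (unfold M; assert (H := Rabs_pos (KK k R0)); nra).
  set (eps := Rmin (/ (2 * Q)) (c / (Q * (M + 1)))).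
  assert (He1 : eps <= / (2 * Q)) by apply Rmin_l.
  assert (He2 : eps <= c / (Q * (M + 1))) by apply Rmin_r.
  assert (He : 0 < eps).
  { apply Rmin_pos; [apply Rinv_0_lt_compat | apply Rdiv_lt_0_compat]; nra. }
  assert (HeM : M * (Q * eps) < c).
  { apply Rle_lt_trans with (M * (c / (M + 1))).
    - apply Rmult_le_compat_l; auto.
      apply Rle_trans with (Q * (c / (Q * (M + 1)))); [apply Rmult_le_compat_l; lra|].
      right; field; lra.
    - replace (M * (c / (M + 1))) with (c - c / (M + 1)) by (field; lra).
      assert (0 < c / (M + 1)) by (apply Rdiv_lt_0_compat; lra). lra. }
  exists eps. split; [exact He|]. intros X u HX Hu.
  apply (Gred_ne0_near k R0 t c B); auto.
  - unfold B. replace u with ((u - u0) + u0) by ring.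
    eapply Rle_trans; [apply Rabs_triang|].
    assert (/ (2 * Q) <= 1) by (rewrite <- Rinv_1; apply Rinv_le_contravar; lra). lra.
  - fold Q. lra.
  - fold Q M. eapply Rle_lt_trans; [|exact HeM].
    apply Rmult_le_compat_l; [lra | apply Rmult_le_compat_l; lra].
Qed.

(** * Crossings at simple roots of g_k *)

Definition disc (k R0 t u : R) : R := R0 ^ 2 * (1 + u ^ 2) - KK k R0 * gk k t u.

Definition mu_den (k R0 t u : R) : R := R0 * sqrt (1 + u ^ 2) + sqrt (disc k R0 t u).

(* The root of [nu_quadratic] of smaller modulus, rationalised so that it stays
   smooth through the zeros of [gk]. *)
Definition mu (k R0 t u : R) : R := gk k t u / mu_den k R0 t u.

(* [nu_eq] solved for [X] at [nu = mu]. *)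
Definition xi (k R0 t u : R) : R := 2 * mu k R0 t u / (2 * qq t u + mu k R0 t u ^ 2).

Lemma mu_den_ge k R0 t u : 0 < R0 -> R0 <= mu_den k R0 t u.
Proof.
  intros HR. unfold mu_den.
  assert (H := one_le_sqrt_1_plus_sq u).
  assert (0 <= sqrt (disc k R0 t u)) by apply sqrt_pos. nra.
Qed.

Lemma nu_quadratic_mu k R0 t u : 0 < R0 -> 0 <= disc k R0 t u ->
  nu_quadratic k R0 t u (mu k R0 t u) = 0.
Proof.
  intros HR Hd. assert (HP := mu_den_ge k R0 t u HR).
  assert (Hm := sqrt_sqrt (1 + u ^ 2) ltac:(nra)). assert (HD := sqrt_sqrt _ Hd).
  unfold nu_quadratic, mu in *. unfold mu_den, disc in *.
  set (m := sqrt (1 + u ^ 2)) in *.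
  set (D := sqrt (R0 ^ 2 * (1 + u ^ 2) - KK k R0 * gk k t u)) in *.
  set (P := R0 * m + D) in *. set (g := gk k t u) in *.
  transitivity (g / P ^ 2 * (D * D - (R0 ^ 2 * (m * m) - KK k R0 * g)));
    [unfold P in *; field; lra|].
  rewrite Hm, HD. ring.
Qed.

Lemma nu_quadratic_small_root k R0 t u w : 0 < R0 -> 0 < KK k R0 -> 0 <= disc k R0 t u ->
  nu_quadratic k R0 t u w = 0 -> Rabs w < R0 / KK k R0 -> w = mu k R0 t u.
Proof.
  intros HR HK Hd Hw Hwb. assert (HP := mu_den_ge k R0 t u HR).
  assert (Hm1 := one_le_sqrt_1_plus_sq u).
  assert (Hm := sqrt_sqrt (1 + u ^ 2) ltac:(nra)).
  assert (HD := sqrt_sqrt _ Hd). assert (HD0 := sqrt_pos (disc k R0 t u)).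
  unfold nu_quadratic, mu in *. unfold mu_den, disc in *.
  set (m := sqrt (1 + u ^ 2)) in *.
  set (D := sqrt (R0 ^ 2 * (1 + u ^ 2) - KK k R0 * gk k t u)) in *.
  set (K := KK k R0) in *. set (g := gk k t u) in *.
  assert (HKw : K * Rabs w < R0).
  { apply (Rmult_lt_compat_l K) in Hwb; auto.
    replace (K * (R0 / K)) with R0 in Hwb by (field; lra). exact Hwb. }
  assert (E : (K * w - R0 * m - D) * (K * w - R0 * m + D) = 0).
  { transitivity (K * (g + K * w ^ 2 - 2 * R0 * m * w) + (R0 ^ 2 * (m * m) - K * g) - D * D);
      [ring|].
    rewrite Hw, Hm, HD. ring. }
  apply Rmult_integral in E. destruct E as [E|E].
  - exfalso. assert (H := RRle_abs w). nra.
  - apply (Rmult_eq_reg_l (K * (R0 * m + D))); [|nra].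
    field_simplify; [|lra].
    transitivity (K * w * (R0 * m + D)); [ring|]. replace (K * w) with (R0 * m - D) by lra.
    transitivity (R0 ^ 2 * (m * m) - D * D); [ring|]. rewrite Hm, HD. ring.
Qed.

Lemma Gred_eq0_iff_xi k R0 t X u : 0 < R0 -> 0 < KK k R0 -> X <> 0 ->
  0 <= 1 - 2 * qq t u * X ^ 2 -> Rabs (nu (qq t u) X) < R0 / KK k R0 ->
  0 <= disc k R0 t u -> 0 < 4 * qq t u ^ 2 - mu k R0 t u ^ 4 ->
  (Gred k R0 t X u = 0 <-> xi k R0 t u = X \/ xi k R0 t u = - X).
Proof.
  intros HR HK HX Hpos Hsmall Hd Hqmu.
  assert (Hnu := nu_eq _ _ HX Hpos). assert (Hroot := nu_quadratic_mu k R0 t u HR Hd).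
  assert (HD : 2 * qq t u + mu k R0 t u ^ 2 <> 0) by (intro E; nra).
  rewrite Gred_factor by auto. unfold xi. set (v := nu (qq t u) X) in *.
  split.
  - intros H0. apply Rmult_integral in H0. destruct H0 as [H0|H0].
    + apply nu_quadratic_small_root in H0; auto. left. rewrite <- H0 in *.
      apply (Rmult_eq_reg_r (2 * qq t u + v ^ 2)); auto. field_simplify; auto. lra.
    + apply nu_quadratic_small_root in H0; auto; [|now rewrite Rabs_Ropp]. right.
      rewrite <- H0 in *. replace ((- v) ^ 2) with (v ^ 2) in * by ring.
      apply (Rmult_eq_reg_r (2 * qq t u + v ^ 2)); auto. field_simplify; auto. lra.
  - intros [HxX|HxX].
    + assert (Hv : v = mu k R0 t u) by (unfold v; rewrite <- HxX; apply nu_of_branch, Hqmu).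
      rewrite Hv, Hroot. ring.
    + assert (Hv : v = - mu k R0 t u).
      { unfold v. replace X with (2 * (- mu k R0 t u) / (2 * qq t u + (- mu k R0 t u) ^ 2))
          by (rewrite <- (Ropp_involutive X), <- HxX; field; exact HD).
        apply nu_of_branch.
        replace ((- mu k R0 t u) ^ 4) with (mu k R0 t u ^ 4) by ring. exact Hqmu. }
      rewrite Hv, Ropp_involutive, Hroot. ring.
Qed.

Lemma xi_eq0_iff k R0 t u : 0 < R0 -> 2 * qq t u + mu k R0 t u ^ 2 <> 0 ->
  (xi k R0 t u = 0 <-> gk k t u = 0).
Proof.
  intros HR HD. assert (HP := mu_den_ge k R0 t u HR). unfold xi, mu. split.
  - intros H. apply Rmult_integral in H. destruct H as [H|H].
    + apply Rmult_integral in H. destruct H as [H|H]; [lra|].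
      apply Rmult_integral in H. destruct H as [H|H]; [exact H|].
      exfalso. revert H. apply Rinv_neq_0_compat. lra.
    + exfalso. revert H. apply Rinv_neq_0_compat, HD.
  - intros ->. unfold Rdiv. ring.
Qed.

Lemma Ck_gk n D k t : open D -> Ck n D (gk k t).
Proof. intros HD. unfold gk. solve_Ck. Qed.

Lemma Ck_qq n D t : open D -> Ck n D (qq t).
Proof. intros HD. unfold qq. apply Ck_div; [exact HD | intros; lra | solve_Ck | solve_Ck]. Qed.

Lemma Ck_mu_den n D k R0 t : open D -> (forall u, D u -> 0 < disc k R0 t u) ->
  Ck n D (mu_den k R0 t).
Proof.
  intros HD Hd. assert (Hg := Ck_gk n D k t HD). unfold mu_den. apply Ck_plus; [exact HD | |].
  - apply Ck_mult; auto using Ck_const. apply Ck_sqrt_comp; [exact HD | intros; nra | solve_Ck].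
  - apply Ck_sqrt_comp; [exact HD | exact Hd |]. unfold disc. solve_Ck.
Qed.

Lemma Ck_mu n D k R0 t : 0 < R0 -> open D -> (forall u, D u -> 0 < disc k R0 t u) ->
  Ck n D (mu k R0 t).
Proof.
  intros HR HD Hd. unfold mu. apply Ck_div; [exact HD | | apply Ck_gk, HD | apply Ck_mu_den; auto].
  intros u _. assert (H := mu_den_ge k R0 t u HR). lra.
Qed.

Lemma Ck_xi n D k R0 t : 0 < R0 -> open D -> (forall u, D u -> 0 < disc k R0 t u) ->
  (forall u, D u -> 2 * qq t u + mu k R0 t u ^ 2 <> 0) -> Ck n D (xi k R0 t).
Proof.
  intros HR HD Hd Hq. unfold xi.
  assert (Hmu := Ck_mu n D k R0 t HR HD Hd). assert (Hqq := Ck_qq n D t HD).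
  apply Ck_div; auto; solve_Ck.
Qed.

Lemma is_derive_mult_root (f h : R -> R) x a : f x = 0 -> is_derive f x a -> ex_derive h x ->
  is_derive (fun y => f y * h y) x (a * h x).
Proof.
  intros H0 Hf [b Hh].
  assert (H := is_derive_mult f h x a b Hf Hh Rmult_comm).
  simpl in H. unfold mult, plus in H; simpl in H. rewrite H0 in H.
  replace (a * h x) with (a * h x + 0 * b) by ring. exact H.
Qed.

Lemma is_derive_xi_root k R0 t D u0 l : 0 < R0 -> open D -> D u0 ->
  (forall u, D u -> 0 < disc k R0 t u) ->
  (forall u, D u -> 2 * qq t u + mu k R0 t u ^ 2 <> 0) ->
  gk k t u0 = 0 -> is_derive (gk k t) u0 l ->
  is_derive (xi k R0 t) u0 (l / mu_den k R0 t u0 / qq t u0).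
Proof.
  intros HR HD Hu0 Hd Hq Hg Hl.
  assert (HP : forall u, mu_den k R0 t u <> 0)
    by (intros u; assert (H := mu_den_ge k R0 t u HR); lra).
  assert (Hmu0 : mu k R0 t u0 = 0) by (unfold mu; rewrite Hg; unfold Rdiv; ring).
  assert (Hq0 : qq t u0 <> 0) by (intro E; apply (Hq u0 Hu0); rewrite E, Hmu0; ring).
  assert (Hmu : is_derive (mu k R0 t) u0 (l * / mu_den k R0 t u0)).
  { apply (is_derive_mult_root (gk k t) (fun u => / mu_den k R0 t u)); auto.
    apply (Ck_ex_derive D 0); auto.
    apply (Ck_comp 1 D (fun x => x <> 0)); auto using open_neq, Ck_Rinv, Ck_mu_den. }
  assert (Hxi : forall u, mu k R0 t u * (2 / (2 * qq t u + mu k R0 t u ^ 2)) = xi k R0 t u)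
    by (intros u; unfold xi, Rdiv; ring).
  apply (is_derive_ext _ _ _ _ Hxi).
  replace (l / mu_den k R0 t u0 / qq t u0)
    with (l * / mu_den k R0 t u0 * (2 / (2 * qq t u0 + mu k R0 t u0 ^ 2)))
    by (rewrite Hmu0; field; auto).
  apply (is_derive_mult_root (mu k R0 t) (fun u => 2 / (2 * qq t u + mu k R0 t u ^ 2))); auto.
  apply (Ck_ex_derive D 0); auto. apply Ck_div; auto using Ck_const.
  assert (Hm := Ck_mu 1 D k R0 t HR HD Hd). assert (Hqq := Ck_qq 1 D t HD). solve_Ck.
Qed.

Lemma simple_root_nbhd k R0 t u0 : 0 < R0 -> gk k t u0 = 0 ->
  exists d, 0 < d /\ forall u, Rabs (u - u0) < d ->
    0 < disc k R0 t u /\ 0 < 4 * qq t u ^ 2 - mu k R0 t u ^ 4.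
Proof.
  intros HR Hg.
  assert (Hdisc_d : ex_derive (disc k R0 t) u0).
  { assert (Ho := open_Ioo (u0 - 1) (u0 + 1)).
    apply (Ck_ex_derive (Ioo (u0 - 1) (u0 + 1)) 0); [| unfold Ioo; lra].
    assert (H := Ck_gk 1 _ k t Ho). unfold disc. solve_Ck. }
  destruct (locally_pos (disc k R0 t) u0 (ex_derive_continuous _ _ Hdisc_d)) as [d0 [Hd0 Hdisc]].
  { unfold disc. rewrite Hg. assert (H := pow2_ge_0 u0). nra. }
  set (D0 := Ioo (u0 - d0) (u0 + d0)).
  assert (HD0 : forall u, D0 u -> 0 < disc k R0 t u)
    by (intros u Hu; apply Hdisc, Rabs_lt_between', Hu).
  set (f := fun u => 4 * qq t u ^ 2 - mu k R0 t u ^ 4).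
  assert (Hf_d : ex_derive f u0).
  { apply (Ck_ex_derive D0 0); [| unfold D0, Ioo; lra].
    assert (Hmu := Ck_mu 1 D0 k R0 t HR (open_Ioo _ _) HD0).
    assert (Hqq := Ck_qq 1 D0 t (open_Ioo _ _)). assert (Ho := open_Ioo (u0 - d0) (u0 + d0)).
    unfold f. solve_Ck. }
  destruct (locally_pos f u0 (ex_derive_continuous _ _ Hf_d)) as [d1 [Hd1 Hpos]].
  { assert (Hmu0 : mu k R0 t u0 = 0) by (unfold mu; rewrite Hg; unfold Rdiv; ring).
    assert (Hq0 : qq t u0 <> 0) by (intro E; rewrite gk_qq, E in Hg; lra).
    unfold f. rewrite Hmu0. assert (H := pow2_gt_0 _ Hq0). lra. }
  exists (Rmin d0 d1). split; [apply Rmin_pos; auto|].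
  intros u Hu. split.
  - apply Hdisc. eapply Rlt_le_trans; [exact Hu | apply Rmin_l].
  - apply Hpos. eapply Rlt_le_trans; [exact Hu | apply Rmin_r].
Qed.

Lemma Gred_eq0_iff_xi_near k R0 t B X u : 0 < R0 -> 0 < KK k R0 -> Rabs u <= B ->
  Rabs X <= / (2 * (1 + 2 * B ^ 2)) -> (1 + 2 * B ^ 2) * Rabs X < R0 / KK k R0 ->
  0 < disc k R0 t u -> 0 < 4 * qq t u ^ 2 - mu k R0 t u ^ 4 ->
  (Gred k R0 t X u = 0 <-> xi k R0 t u = X \/ xi k R0 t u = - X).
Proof.
  intros HR HK HuB HXQ HXK Hdisc Hqmu.
  destruct (Req_dec X 0) as [->|HX0].
  - assert (Hden : 2 * qq t u + mu k R0 t u ^ 2 <> 0) by (intro E; nra).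
    rewrite Gred_0, Ropp_0. assert (Hxi := xi_eq0_iff k R0 t u HR Hden).
    split; [intros H; left; apply Hxi; destruct (Req_dec (gk k t u) 0); auto;
            exfalso; revert H; apply pow_nonzero; auto|].
    intros [H|H]; apply Hxi in H; rewrite H; ring.
  - destruct (nu_near_exceptional_line t B X u HuB HXQ) as [Hpos Hnu].
    apply Gred_eq0_iff_xi; auto; lra.
Qed.

Definition simple_root (f : R -> R) (x : R) : Prop :=
  f x = 0 /\ exists l, is_derive f x l /\ l <> 0.

Lemma transverse_X_crossing_at_simple_root k R0 t u0 : 0 < R0 -> 0 < KK k R0 ->
  simple_root (gk k t) u0 -> transverse_X_crossing (Gred k R0 t) u0.
Proof.
  intros HR HK [Hg [l [Hl Hl0]]].
  destruct (simple_root_nbhd k R0 t u0 HR Hg) as [d0 [Hd0 Hnb]].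
  set (B := Rabs u0 + 1). set (Q := 1 + 2 * B ^ 2).
  assert (HQ : 1 <= Q) by (unfold Q; nra).
  set (d := Rmin (Rmin d0 1) (Rmin (/ (2 * Q)) (R0 / (KK k R0 * Q)))).
  assert (Hdd0 : d <= d0) by (eapply Rle_trans; apply Rmin_l).
  assert (Hd1 : d <= 1) by (eapply Rle_trans; [apply Rmin_l | apply Rmin_r]).
  assert (HdQ : d <= / (2 * Q)) by (eapply Rle_trans; [apply Rmin_r | apply Rmin_l]).
  assert (HdK : Q * d <= R0 / KK k R0).
  { apply Rle_trans with (Q * (R0 / (KK k R0 * Q))); [|right; field; lra].
    apply Rmult_le_compat_l; [lra | eapply Rle_trans; apply Rmin_r]. }
  assert (Hd : 0 < d).
  { repeat apply Rmin_pos; try lra; [apply Rinv_0_lt_compat | apply Rdiv_lt_0_compat]; nra. }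
  set (D := Ioo (u0 - d) (u0 + d)).
  assert (HnbD : forall u, D u -> 0 < disc k R0 t u /\ 0 < 4 * qq t u ^ 2 - mu k R0 t u ^ 4).
  { intros u Hu. apply Hnb, Rabs_lt_between'. unfold D, Ioo in Hu. lra. }
  assert (Hden : forall u, D u -> 2 * qq t u + mu k R0 t u ^ 2 <> 0).
  { intros u Hu E. destruct (HnbD u Hu) as [_ H]. nra. }
  assert (Hu0 : D u0) by (unfold D, Ioo; lra).
  apply (transverse_X_crossing_of_branch _ (xi k R0 t) u0 d Hd).
  - intros n. apply Ck_xi; auto using open_Ioo. apply HnbD.
  - apply xi_eq0_iff; auto.
  - assert (Hq0 : qq t u0 <> 0) by (intro E; rewrite gk_qq, E in Hg; lra).
    assert (HP := mu_den_ge k R0 t u0 HR).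
    rewrite (is_derive_unique _ _ _ (is_derive_xi_root k R0 t D u0 l HR (open_Ioo _ _) Hu0
      (fun u Hu => proj1 (HnbD u Hu)) Hden Hg Hl)).
    unfold Rdiv. repeat apply Rmult_integral_contrapositive_currified; auto;
      apply Rinv_neq_0_compat; lra.
  - intros X u HX Hu.
    assert (HuD : D u) by (apply Rabs_lt_between' in Hu; unfold D, Ioo; lra).
    apply (Gred_eq0_iff_xi_near k R0 t B); auto; try apply HnbD, HuD; fold Q.
    + unfold B. replace u with ((u - u0) + u0) by ring.
      eapply Rle_trans; [apply Rabs_triang | lra].
    + lra.
    + apply Rlt_le_trans with (Q * d); [apply Rmult_lt_compat_l; lra | exact HdK].
Qed.

Lemma gk_factor k t : t <> 0 -> 0 < k * (k - 1) ->
  exists up um, up <> um /\ forall u, gk k t u = k * ss t ^ 2 * (u - up) * (u - um).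
Proof.
  intros Ht Hk.
  assert (Hs2 : 0 < ss t ^ 2) by (apply pow2_gt_0, ss_neq0, Ht).
  assert (Hks : k * ss t ^ 2 <> 0) by (intro E; apply Rmult_integral in E; destruct E; nra).
  set (Dl := sqrt (k * (k - 1) * ss t ^ 2)).
  assert (HDl : 0 < Dl) by (apply sqrt_lt_R0; nra).
  assert (HDl2 : Dl * Dl = k * (k - 1) * ss t ^ 2) by (apply sqrt_sqrt; nra).
  exists ((- (k * ss t * cc t) + Dl) / (k * ss t ^ 2)),
         ((- (k * ss t * cc t) - Dl) / (k * ss t ^ 2)).
  split.
  - intro E. apply (Rmult_eq_compat_r (k * ss t ^ 2)) in E.
    unfold Rdiv in E. rewrite !Rmult_assoc, Rinv_l, !Rmult_1_r in E by exact Hks. lra.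
  - intros u. apply (Rmult_eq_reg_l (k * ss t ^ 2)); auto.
    rewrite gk_square. replace (k * ss t ^ 2 * (1 - k)) with (- (Dl * Dl)) by (rewrite HDl2; ring).
    field. split; [apply ss_neq0, Ht | intros ->; lra].
Qed.

Lemma gk_simple_roots k t : t <> 0 -> 0 < k * (k - 1) ->
  exists up um, up <> um /\ (forall u, gk k t u = 0 <-> u = up \/ u = um) /\
    simple_root (gk k t) up /\ simple_root (gk k t) um.
Proof.
  intros Ht Hk. destruct (gk_factor k t Ht Hk) as [up [um [Hne Hfac]]].
  assert (Hks : k * ss t ^ 2 <> 0).
  { assert (H := pow2_gt_0 _ (ss_neq0 t Ht)). intro E. apply Rmult_integral in E. destruct E; nra. }
  assert (Hder : forall x, is_derive (gk k t) x (k * ss t ^ 2 * ((x - um) + (x - up)))).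
  { intros x. assert (Hext : forall u, k * ss t ^ 2 * (u - up) * (u - um) = gk k t u)
      by (intros u; symmetry; apply Hfac).
    apply (is_derive_ext _ _ _ _ Hext). auto_derive; [trivial | ring]. }
  exists up, um. split; [exact Hne|]. split; [|split].
  - intros u. rewrite Hfac. split.
    + intros H. apply Rmult_integral in H. destruct H as [H|H]; [|right; lra].
      apply Rmult_integral in H. destruct H as [H|H]; [contradiction | left; lra].
    + intros [->| ->]; ring.
  - split; [rewrite Hfac; ring|]. eexists. split; [apply Hder|].
    apply Rmult_integral_contrapositive_currified; [exact Hks | intro E; apply Hne; lra].
  - split; [rewrite Hfac; ring|]. eexists. split; [apply Hder|].
    apply Rmult_integral_contrapositive_currified; [exact Hks | intro E; apply Hne; lra].
Qed.

Theorem theorem5 (k R0 t : R) :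
  0 < R0 -> t <> 0 -> k <> 0 -> k <> 1 ->
  ((k < 0 \/ 1 < k) ->
     exists up um : R,
       up <> um /\ gk k t up = 0 /\ gk k t um = 0 /\
       (forall u, gk k t u = 0 -> u = up \/ u = um) /\
       transverse_X_crossing (Gred k R0 t) up /\
       transverse_X_crossing (Gred k R0 t) um) /\
  ((0 < k < 1) ->
     (forall u, gk k t u <> 0) /\
     (forall u0, no_branch_at (Gred k R0 t) u0)).
Proof.
  (* [k <> 0] and [k <> 1] are implied by the chamber conditions. *)
  intros HR Ht _ _. split.
  - intros Hk.
    assert (Hkk : 0 < k * (k - 1)) by (destruct Hk; nra).
    assert (HK : 0 < KK k R0) by (unfold KK; nra).
    destruct (gk_simple_roots k t Ht Hkk) as [up [um [Hne [Hroots [Hup Hum]]]]].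
    exists up, um. split; [exact Hne|]. split; [apply Hup|]. split; [apply Hum|].
    split; [intros u; apply Hroots|].
    split; apply transverse_X_crossing_at_simple_root; auto.
  - intros Hk. assert (Hg : forall u, 1 - k <= gk k t u) by (intros u; apply gk_ge; lra || auto).
    split.
    + intros u. specialize (Hg u). lra.
    + intros u0. apply (no_branch_at_of_gk_ge k R0 t (1 - k)); auto; lra.
Qed.
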